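(* Let $0<q<p$ with $p+q=1$, and let $\mathcal D$ be the set of Dyck words over $\{S,H\}$ (S an up-step, H a down-step: equally many S and H, every prefix with at least as many S as H), including the empty word, endowed with the probability measure $\bar{\mathbb P}[w]=p(pq)^{|w|}$, where $|w|$ is half the length of $w$. For every integer $n\ge1$, the $\bar{\mathbb P}$-probability that a Dyck word ends with the subsequence $SH\cdots H$ with exactly $n$ letters H at the end is $pq^n$.
   Context: $\bar{\mathbb P}$ is a probability measure on $\mathcal D$: $\bar{\mathbb P}[w]$ is the probability that a random walk from $0$, with up-step probability $q$ and down-step probability $p$, follows the path $w$ and then steps to $-1$. *)

From HB Require Import structures.
From mathcomp Require Import all_boot all_order all_algebra.
From mathcomp Require Import all_classical all_reals all_analysis.
Set Implicit Arguments. Unset Strict Implicit. Unset Printing Implicit Defensive.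
Import Order.TTheory GRing.Theory Num.Theory.
Local Open Scope ring_scope.

(* Words over {S,H}: [true] = S (up-step), [false] = H (down-step). *)

Fixpoint dyck_from (h : nat) (w : seq bool) : bool :=
  match w with
  | [::] => h == 0%N
  | b :: w' => if b then dyck_from h.+1 w'
               else if h is h'.+1 then dyck_from h' w' else false
  end.

Definition dyck (w : seq bool) : bool := dyck_from 0 w.

Definition half_len (w : seq bool) : nat := (size w)./2.

Definition Pbar (R : numDomainType) (p q : R) (w : seq bool) : R :=
  p * (p * q) ^+ half_len w.

Definition ends_SHn (n : nat) (w : seq bool) : bool :=
  suffix (true :: nseq n false) w.

(* Contribution to \bar P[A] of Dyck words of half-length k
   (words of length 2k, enumerated as tuples). *)
Definition Pbar_level (R : numDomainType) (p q : R) (A : pred (seq bool)) (k : nat) : R :=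
  \sum_(t : (k.*2).-tuple bool | dyck t && A t) Pbar p q t.

From HB Require Import structures.
From mathcomp Require Import all_boot all_order all_algebra.
From mathcomp Require Import all_classical all_reals all_analysis.
From mathcomp Require Import zify ring lra.
Set Implicit Arguments. Unset Strict Implicit. Unset Printing Implicit Defensive.
Import Order.TTheory GRing.Theory Num.Theory numFieldNormedType.Exports.
Local Open Scope classical_set_scope.
Local Open Scope ring_scope.

(* Since Pbar[w] only depends on the length of w, reversing a Dyck word and
   exchanging S and H does not change Pbar, and it turns the words ending with
   S H^n into the words beginning with S^n H.  Such a word is S^n H followed by
   a walk v from height n-1 that stays nonnegative and returns to 0, and
   Pbar[S^n H v] = q^n p * (p * weight v), where p * weight v is the
   probability that the walk started at n-1 first reaches -1 along v.  As
   q < p the walk reaches -1 almost surely, so these probabilities add up to 1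
   and the answer is p q^n.  Quantitatively, the probability that the walk
   started at height h stays nonnegative for M steps is at most
   r^h (q r + p / r)^M for any r >= 1, and
   r = 1 / (2 q) makes the ratio q r + p / r = 1/2 + 2 p q smaller than 1. *)

Definition walk_step (b : bool) (h : nat) : option nat :=
  if b then Some h.+1 else if h is h'.+1 then Some h' else None.

Fixpoint walk_end (h : nat) (w : seq bool) : option nat :=
  if w is b :: w' then obind (walk_end^~ w') (walk_step b h) else Some h.

Lemma walk_end_rcons h w b :
  walk_end h (rcons w b) = obind (walk_step b) (walk_end h w).
Proof.
elim: w h => [|c w IH] h /=; first by case: (walk_step b h).
by case: (walk_step c h) => [h'|] //=; rewrite IH.
Qed.

Lemma walk_end_nseq_true h n w :
  walk_end h (nseq n true ++ w) = walk_end (h + n) w.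
Proof. by elim: n h => [|n IH] h /=; rewrite ?addn0 ?IH ?addSnnS. Qed.

Lemma dyck_fromE h w : dyck_from h w = (walk_end h w == Some 0%N).
Proof. by elim: w h => [|[] w IH] [|h] //=. Qed.

Lemma walk_end_count h g w :
  walk_end h w = Some g -> (h + count id w = g + count negb w)%N.
Proof.
elim: w h => [|b w IH] h /=; first by move=> [->].
by case: b h => [|] [|h] //= /IH; lia.
Qed.

Lemma walk_end_rev_negb h g w :
  (walk_end h (rev (map negb w)) == Some g) = (walk_end g w == Some h).
Proof.
elim: w h g => [|b w IH] h g; first by rewrite eq_sym.
rewrite map_cons rev_cons walk_end_rcons.
by case: b g => [|] [|g] /=; rewrite -?IH; case: (walk_end h _) => [[|x]|].
Qed.

Lemma count_id_negb (w : seq bool) : (count id w + count negb w)%N = size w.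
Proof. exact: count_predC. Qed.

Lemma rev_negbK : involutive (fun w : seq bool => rev (map negb w)).
Proof. by move=> w; rewrite map_rev revK (mapK negbK). Qed.

Lemma dyck_rev_negb w : dyck (rev (map negb w)) = dyck w.
Proof. by rewrite /dyck !dyck_fromE walk_end_rev_negb. Qed.

Lemma prefix_map (T U : eqType) (f : T -> U) s1 s2 : injective f ->
  prefix (map f s1) (map f s2) = prefix s1 s2.
Proof.
by move=> f_inj; rewrite !prefixE size_map -map_take (inj_eq (inj_map f_inj)).
Qed.

Lemma ends_SHn_rev_negb n w :
  ends_SHn n (rev (map negb w)) = prefix (rcons (nseq n true) false) w.
Proof.
rewrite /ends_SHn -(revK (true :: _)) suffix_rev rev_cons rev_nseq.
by rewrite -[RHS](prefix_map _ _ negb_inj) map_rcons map_nseq.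
Qed.

Lemma big_tuple_cons (V : nmodType) m (F : seq bool -> V) :
  \sum_(t : m.+1.-tuple bool) F t =
  \sum_(t : m.-tuple bool) F (true :: t) + \sum_(t : m.-tuple bool) F (false :: t).
Proof.
rewrite (reindex (fun x : bool * m.-tuple bool => [tuple of x.1 :: x.2])) /=.
  by rewrite -(pair_big xpredT xpredT (fun b (t : m.-tuple bool) => F (b :: t))) big_bool.
exists (fun t : m.+1.-tuple bool => (thead t, [tuple of behead t])).
  by move=> [b t] _; congr pair; apply: val_inj.
by move=> [[|b s] //= ?] _; apply: val_inj.
Qed.

Lemma sum_even_nat (V : nmodType) (F : nat -> V) K :
  (forall j, odd j -> F j = 0) ->
  \sum_(0 <= k < K) F k.*2 = \sum_(0 <= j < K.*2) F j.
Proof.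
move=> F_odd; elim: K => [|K IH]; first by rewrite !big_geq.
by rewrite doubleS !big_nat_recr //= IH (F_odd K.*2.+1) ?addr0 //= odd_double.
Qed.

Lemma sum_shift_nat (V : nmodType) (F : nat -> V) a N :
  \sum_(0 <= j < N) (if (a <= j)%N then F (j - a)%N else 0) =
  \sum_(0 <= m < N - a) F m.
Proof.
elim: N => [|N IH]; first by rewrite !big_geq.
rewrite big_nat_recr //= IH; case: leqP => [le_a_N | lt_N_a].
  by rewrite subSn // big_nat_recr.
have [-> ->] : (N - a = 0 /\ N.+1 - a = 0)%N by lia.
by rewrite addr0.
Qed.

Section WalkMass.
Variables (R : numDomainType) (p q : R).

Definition walk_weight (w : seq bool) : R := \prod_(b <- w) (if b then q else p).

Definition walk_mass (A : pred (seq bool)) (m : nat) : R :=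
  \sum_(t : m.-tuple bool | A t) walk_weight t.

(* [p * end_mass (pred1 0) h m] is the probability that the walk started at
   height h first reaches -1 at step m + 1, and [end_mass predT h M] is the
   probability that it stays nonnegative during its first M steps. *)
Definition end_mass (E : pred nat) (h m : nat) : R :=
  walk_mass (fun w => oapp E false (walk_end h w)) m.

Lemma walk_weight_cons b w :
  walk_weight (b :: w) = (if b then q else p) * walk_weight w.
Proof. exact: big_cons. Qed.

Lemma walk_weight_count w :
  walk_weight w = q ^+ count id w * p ^+ count negb w.
Proof.
elim: w => [|b w IH]; first by rewrite /walk_weight big_nil mulr1.
by rewrite walk_weight_cons IH; case: b; rewrite /= !exprS; ring.
Qed.

Lemma eq_walk_mass A B m : A =1 B -> walk_mass A m = walk_mass B m.
Proof. by move=> eqAB; apply: eq_bigl => t; exact: eqAB. Qed.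

Lemma walk_mass0 m : walk_mass (fun _ => false) m = 0.
Proof. exact: big_pred0. Qed.

Lemma walk_mass_ge0 A m : 0 <= p -> 0 <= q -> 0 <= walk_mass A m.
Proof.
move=> p_ge0 q_ge0; apply: sumr_ge0 => t _.
by apply: prodr_ge0 => -[].
Qed.

Lemma walk_massS A m :
  walk_mass A m.+1 = q * walk_mass (fun w => A (true :: w)) m
                     + p * walk_mass (fun w => A (false :: w)) m.
Proof.
rewrite /walk_mass big_mkcond.
rewrite (big_tuple_cons _ (fun w => if A w then walk_weight w else 0)) !mulr_sumr.
by congr (_ + _); rewrite [RHS]big_mkcond; apply: eq_bigr => t _;
  rewrite walk_weight_cons; case: ifP; rewrite ?mulr0.
Qed.

Lemma walk_mass_prefix u A m :
  walk_mass (fun w => prefix u w && A w) (size u + m) =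
  walk_weight u * walk_mass (fun w => A (u ++ w)) m.
Proof.
elim: u A => [|b u IH] A.
  by rewrite /walk_weight big_nil mul1r; apply: eq_bigl => t; rewrite prefix0s.
rewrite addSn walk_massS walk_weight_cons -mulrA.
by case: b => /=; rewrite IH walk_mass0 mulr0 ?addr0 ?add0r.
Qed.

Lemma walk_mass_prefix_sub u A m :
  walk_mass (fun w => prefix u w && A w) m =
  if (size u <= m)%N then walk_weight u * walk_mass (fun w => A (u ++ w)) (m - size u)
  else 0.
Proof.
case: leqP => [/subnKC {1}<- | lt_m_u]; first exact: walk_mass_prefix.
apply: big_pred0 => t; apply/negbTE; apply: contraTN lt_m_u => /andP[/size_prefix].
by rewrite size_tuple -leqNgt.
Qed.

Lemma end_mass0 E h : end_mass E h 0 = (E h)%:R.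
Proof.
rewrite /end_mass /walk_mass big_mkcond (big_pred1 [tuple]) => [|t].
  by rewrite /= /walk_weight big_nil; case: (E h).
exact/esym/eqP/tuple0.
Qed.

Lemma end_massS E h m :
  end_mass E h m.+1 =
  q * end_mass E h.+1 m + (if h is h'.+1 then p * end_mass E h' m else 0).
Proof. by rewrite /end_mass walk_massS; case: h => [|h] //=; rewrite walk_mass0 mulr0. Qed.

Lemma end_mass_odd g h m : odd (g + h + m) -> end_mass (pred1 g) h m = 0.
Proof.
move=> odd_ghm; apply: big_pred0 => t /=.
case end_t: (walk_end h t) => [x|] //=; apply/negbTE/eqP => x_eq_g.
have := count_id_negb t; rewrite size_tuple => size_t.
have := walk_end_count end_t; rewrite x_eq_g => count_t.
suff : (g + h + m = (g + count negb t).*2)%N.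
  by move/(congr1 odd); rewrite odd_ghm odd_double.
lia.
Qed.

Lemma walk_weight_dyck w : dyck w -> p * walk_weight w = Pbar p q w.
Proof.
rewrite /dyck dyck_fromE => /eqP /walk_end_count; rewrite !add0n => count_eq.
rewrite /Pbar /half_len -count_id_negb count_eq addnn doubleK.
by rewrite walk_weight_count count_eq exprMn; ring.
Qed.

Lemma Pbar_level_walk_mass A k :
  Pbar_level p q A k = p * walk_mass (fun w => dyck w && A w) k.*2.
Proof.
rewrite /Pbar_level /walk_mass mulr_sumr.
by apply: eq_bigr => t /andP[dyck_t _]; rewrite walk_weight_dyck.
Qed.

Hypothesis hpq : p + q = 1.

Lemma first_passage_plus_survival h M :
  p * \sum_(0 <= m < M) end_mass (pred1 0%N) h m + end_mass predT h M = 1.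
Proof.
elim: M h => [|M IH] h; first by rewrite big_geq // mulr0 add0r end_mass0.
rewrite big_nat_recl // end_mass0 end_massS.
under eq_bigr do rewrite end_massS.
rewrite big_split /= -mulr_sumr.
case: h => [|h] /=.
  rewrite big1_eq !addr0.
  transitivity (p + q * (p * \sum_(0 <= m < M) end_mass (pred1 0%N) 1 m
                         + end_mass predT 1 M)); first by ring.
  by rewrite IH mulr1.
rewrite -mulr_sumr.
transitivity (q * (p * \sum_(0 <= m < M) end_mass (pred1 0%N) h.+2 m + end_mass predT h.+2 M)
              + p * (p * \sum_(0 <= m < M) end_mass (pred1 0%N) h m + end_mass predT h M)).
  by ring.
by rewrite !IH !mulr1 addrC.
Qed.

End WalkMass.

Lemma Pbar_level_rev_negb (R : numDomainType) (p q : R) A k :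
  Pbar_level p q A k = Pbar_level p q (fun w => A (rev (map negb w))) k.
Proof.
pose rc (t : (k.*2).-tuple bool) := [tuple of rev (map negb t)].
have rcK : involutive rc by move=> t; apply: val_inj; exact: rev_negbK.
rewrite /Pbar_level (reindex_inj (inv_inj rcK)) /=.
by apply: eq_big => [t|t _]; rewrite ?dyck_rev_negb // /Pbar /half_len size_rev size_map.
Qed.

Lemma Pbar_level_ends_SHn (R : numDomainType) (p q : R) n k :
  Pbar_level p q (ends_SHn n.+1) k =
  p * q ^+ n.+1 * p *
    (if (n.+2 <= k.*2)%N then end_mass p q (pred1 0%N) n (k.*2 - n.+2) else 0).
Proof.
rewrite Pbar_level_rev_negb Pbar_level_walk_mass.
rewrite (@eq_walk_mass _ _ _ _
    (fun w => prefix (rcons (nseq n.+1 true) false) w && dyck w));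
  last by move=> w; rewrite ends_SHn_rev_negb andbC.
rewrite walk_mass_prefix_sub size_rcons size_nseq; case: ifP => _; last by rewrite !mulr0.
have -> : walk_weight p q (rcons (nseq n.+1 true) false) = q ^+ n.+1 * p.
  by rewrite walk_weight_count -cats1 !count_cat !count_nseq /= mul1n mul0n !addn0.
rewrite !mulrA; congr (_ * _); apply: eq_walk_mass => w.
rewrite /dyck dyck_fromE cat_rcons walk_end_nseq_true /=.
by case: (walk_end n w).
Qed.

Lemma series_Pbar_level_ends_SHn (R : numDomainType) (p q : R) n K :
  p + q = 1 ->
  series (Pbar_level p q (ends_SHn n.+1)) K =
  p * q ^+ n.+1 * (1 - end_mass p q predT n (K.*2 - n.+2)).
Proof.
move=> hpq; rewrite /series /=.
under eq_bigr do rewrite Pbar_level_ends_SHn.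
rewrite -mulr_sumr (sum_even_nat (F := fun j =>
  if (n.+2 <= j)%N then end_mass p q (pred1 0%N) n (j - n.+2) else 0)).
  rewrite sum_shift_nat -mulrA.
  by rewrite -(first_passage_plus_survival hpq n (K.*2 - n.+2)) addrK.
move=> j odd_j; case: ifP => // le_n2_j; apply: end_mass_odd.
rewrite add0n (_ : n + _ = j - 2)%N; last by lia.
by rewrite oddB ?odd_j // (leq_trans _ le_n2_j).
Qed.

(* At each step, r ^+ height is multiplied on average by q * r + p / r. *)
Lemma survival_le (R : realFieldType) (p q r : R) h M :
  0 <= p -> 0 <= q -> 1 <= r ->
  end_mass p q predT h M <= r ^+ h * (q * r + p / r) ^+ M.
Proof.
move=> p_ge0 q_ge0 r_ge1; have r_gt0 : 0 < r := lt_le_trans ltr01 r_ge1.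
have r_ge0 := ltW r_gt0.
have rho_ge0 : 0 <= q * r + p / r by apply: addr_ge0; [exact: mulr_ge0 | exact: divr_ge0].
elim: M h => [|M IH] h; first by rewrite end_mass0 expr0 mulr1 exprn_ege1.
rewrite end_massS; case: h => [|h].
  rewrite addr0 expr0 mul1r exprS; apply: le_trans (ler_wpM2l q_ge0 (IH 1%N)) _.
  rewrite expr1 mulrA mulrDl lerDl.
  exact: mulr_ge0 (divr_ge0 p_ge0 r_ge0) (exprn_ge0 _ rho_ge0).
apply: le_trans (lerD (ler_wpM2l q_ge0 (IH h.+2)) (ler_wpM2l p_ge0 (IH h))) _.
by rewrite le_eqVlt; apply/orP; left; apply/eqP; rewrite !exprS; field; rewrite gt_eqF.
Qed.

Lemma survival_cvg0 (R : archiRealFieldType) (p q : R) h :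
  0 < q -> q < p -> p + q = 1 -> end_mass p q predT h M @[M --> \oo] --> 0.
Proof.
move=> q_gt0 q_lt_p hpq; have p_gt0 := lt_trans q_gt0 q_lt_p.
have [p_ge0 q_ge0] := (ltW p_gt0, ltW q_gt0).
pose r := (2 * q)^-1; pose rho := q * r + p / r.
have r_ge1 : 1 <= r by rewrite /r -div1r ler_pdivlMr; lra.
have rhoE : rho = 2^-1 + 2 * p * q by rewrite /rho /r; field; lra.
have rho_ge0 : 0 <= rho by rewrite rhoE; nra.
have rho_lt1 : rho < 1.
  rewrite rhoE; have : 0 < (p - q) * (p - q) by apply: mulr_gt0; lra.
  have : (p + q) * (p + q) = 1 by rewrite hpq mulr1.
  nra.
apply: (@squeeze_cvgr _ _ _ _ (cst 0) (fun M => r ^+ h * rho ^+ M)).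
- by near=> M; rewrite walk_mass_ge0 ?survival_le.
- exact: cvg_cst.
- rewrite -(mulr0 (r ^+ h)); apply: cvgMl_tmp; apply: cvg_expr; rewrite ger0_norm //.
Unshelve. all: by end_near.
Qed.

Theorem lemma9 (R : realType) (p q : R) (hq : 0 < q) (hqp : q < p)
  (hpq : p + q = 1) (n : nat) (hn : (1 <= n)%N) :
  series (Pbar_level p q (ends_SHn n)) @ \oo --> p * q ^+ n.
Proof.
case: n hn => // n _.
have double_sub_cvg : (fun K => (K.*2 - n.+2)%N) @ \oo --> \oo.
  under eq_fun do rewrite -mul2n.
  exact: cvg_comp _ _ (cvg_mulnl 2 isT) (cvg_subnr _).
rewrite (funext (fun K => series_Pbar_level_ends_SHn n K hpq)).
rewrite -[X in _ --> X]mulr1 -[1 in X in _ --> X](subr0 1).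
apply: cvgMl_tmp; apply: cvgB; first exact: cvg_cst.
exact: cvg_comp _ _ double_sub_cvg (survival_cvg0 n hq hqp hpq).
Qed.
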